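(* Let $U\in\widetilde{\mathcal V}^r$, let $\Phi$ be a $q\times q$ matrix operator acting on $\mathcal B^q$, let $K_0\in\mathcal B^q$ and set $K_k=\Phi^kK_0$ for $k\ge0$. Suppose that to each $X\in\mathcal B^q$ there is assigned $\Omega(X)\in\widetilde{\mathcal V}^r$ satisfying the characteristic operator equation \[ (E\Omega(X))U-U\Omega(X)=U'[\Phi X]-\lambda U'[X]. \] Let $V_0,W_0\in\widetilde{\mathcal V}^r$ and $\rho_0\in\mathcal B^q$ satisfy \[ (EV_0)U-UV_0=U'[K_0],\qquad (EW_0)U-UW_0=U'[\rho_0]+\lambda U_\lambda . \] Define $\rho_l=\Phi^l\rho_0$ for $l\ge1$ and \[ V_k=\lambda^kV_0+\sum_{i=1}^k\lambda^{k-i}\Omega(K_{i-1}),\qquad W_l=\lambda^lW_0+\sum_{j=1}^l\lambda^{l-j}\Omega(\rho_{j-1}),\qquad k,l\ge1 . \] Then for all $k,l\ge0$, \[ (EV_k)U-UV_k=U'[K_k],\qquad (EW_l)U-UW_l=U'[\rho_l]+\lambda^{l+1}U_\lambda . \] Consequently $u_t=K_k$ and $u_t=\rho_l$ have the isospectral ($\lambda_t=0$) and nonisospectral ($\lambda_t=\lambda^{l+1}$) discrete zero curvature representations $U_t=(EV_k)U-UV_k$ and $U_t=(EW_l)U-UW_l$, respectively. The same conclusion holds in the following variant: $J,M$ are $q\times q$ matrix operators, $K_k=JG_k=MG_{k-1}$ ($k\ge0$) with $G_{k-1}\in\mathcal B^q$ ($k\ge0$), $\rho_0=J\gamma_0$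 and $\rho_l=J\gamma_l=M\gamma_{l-1}$ ($l\ge1$) with $\gamma_l\in\mathcal B^q$, $\Omega$ replaced by $\Omega_J(G)\in\widetilde{\mathcal V}^r$ satisfying $(E\Omega_J(G))U-U\Omega_J(G)=U'[MG]-\lambda U'[JG]$ for each $G\in\mathcal B^q$, and $V_k=\lambda^kV_0+\sum_{i=1}^k\lambda^{k-i}\Omega_J(G_{i-1})$, $W_l=\lambda^lW_0+\sum_{j=1}^l\lambda^{l-j}\Omega_J(\gamma_{j-1})$.
   Context: $u=(u_1,\dots,u_q)^T$, $u_i(t,n)$ real functions on $\mathbb R\times\mathbb Z$; $\mathcal B$ = real functions $P(t,n,u)$ smooth in $t,n$ and $C^\infty$-Gateaux differentiable in $u$; $\mathcal B^q$ = $q$-vectors over $\mathcal B$; $\widetilde{\mathcal V}^r$ = $r\times r$ matrices with entries in $\mathcal B$ depending smoothly on a real parameter $\lambda$; $U_\lambda=\partial U/\partial\lambda$. $E$ is the shift operator $n\mapsto n+1$, acting on matrices entrywise on all $n$-dependence (including through $u$). Gateaux derivative $X'[S]=\frac{d}{d\varepsilon}|_{\varepsilon=0}X(u+\varepsilon S)$, linear in $S$. The discrete spectral problem is $E\phi=U\phi$, $\phi_t=V\phi$, whose compatibility condition is the discrete zero curvature equation $U_t=(EV)U-UV$, with $U_t=U'[u_t]+\lambda_tU_\lambda$. *)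

From HB Require Import structures.
From mathcomp Require Import all_boot all_order all_algebra.
From mathcomp Require Import all_classical all_reals.
From mathcomp Require Import topology normedtype derive.
Set Implicit Arguments. Unset Strict Implicit. Unset Printing Implicit Defensive.
Import Order.TTheory GRing.Theory Num.Theory.
Local Open Scope ring_scope.

(* A field configuration u = (u_1,...,u_q)^T : R x Z -> R^q, u(t,n). *)
Definition field (R : realType) (q : nat) := R -> int -> 'cV[R]_q.

(* B^q : q-vectors of functions P(t,n,u); P depends on the whole
   configuration u (hence on any shifts u(t,n+k)), and on t, n. *)
Definition Bq (R : realType) (q : nat) := field R q -> field R q.

(* \tilde V^r : r x r matrices over B depending on the spectral parameter
   lambda (first argument). *)
Definition Vr (R : realType) (q r : nat) := R -> field R q -> R -> int -> 'M[R]_r.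

(* Shift operator E : n |-> n+1, acting on all n-dependence (including the
   one through u, since V lam u t n may involve u at any site). *)
Definition shiftE (R : realType) (q r : nat) (V : Vr R q r) : Vr R q r :=
  fun lam u t n => V lam u t (n + 1)%R.

Definition zc_op (R : realType) (q r : nat) (U V : Vr R q r) : Vr R q r :=
  fun lam u t n => shiftE V lam u t n *m U lam u t n - U lam u t n *m V lam u t n.

Definition gateaux (R : realType) (q r : nat) (X : Vr R q r) (S : Bq R q)
  : Vr R q r :=
  fun lam u t n => \matrix_(i, j)
    @derive1 R R^o (fun eps : R => X lam (fun t' n' => u t' n' + eps *: S u t' n') t n i j) 0.

Definition dlam (R : realType) (q r : nat) (X : Vr R q r) : Vr R q r :=
  fun lam u t n => \matrix_(i, j) @derive1 R R^o (fun l : R => X l u t n i j) lam.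

(* U_t = U'[u_t] + lambda_t U_lambda, for the flow u_t = ut and the
   spectral evolution lambda_t = lamt(lambda). *)
Definition Ut (R : realType) (q r : nat) (U : Vr R q r) (ut : Bq R q)
  (lamt : R -> R) : Vr R q r :=
  fun lam u t n => gateaux U ut lam u t n + lamt lam *: dlam U lam u t n.

Definition seqV (R : realType) (q r : nat) (Y0 : Vr R q r)
  (Om : Bq R q -> Vr R q r) (Z : nat -> Bq R q) (k : nat) : Vr R q r :=
  fun lam u t n => lam ^+ k *: Y0 lam u t n
    + \sum_(1 <= i < k.+1) lam ^+ (k - i) *: Om (Z i.-1) lam u t n.

From mathcomp Require Import all_boot all_order all_algebra.
From mathcomp Require Import all_classical all_reals.
From mathcomp Require Import topology normedtype derive.
Import Order.TTheory GRing.Theory Num.Theory.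
Local Open Scope ring_scope.

(* Y_k satisfies Y_{k+1} = lambda Y_k + Om(Z_k), and Y |-> (EY)U - UY is
   linear over functions of lambda alone.  Hence if the right-hand sides A_k
   of the zero curvature equations obey Om(Z_k) |-> A_{k+1} - lambda A_k, an
   induction on k telescopes to (EY_k)U - UY_k = A_k.  For the isospectral
   flows A_k = U'[K_k]; for the nonisospectral ones A_l = U'[rho_l] +
   lambda^(l+1) U_lambda, the U_lambda terms cancelling because lambda times
   lambda^(l+1) is lambda^(l+2). *)

Section ZeroCurvature.

Variables (R : realType) (q r : nat) (U : Vr R q r).

Lemma seqV_S (Y0 : Vr R q r) (Om : Bq R q -> Vr R q r) (Z : nat -> Bq R q)
    (k : nat) lam u t n :
  seqV Y0 Om Z k.+1 lam u t n
  = lam *: seqV Y0 Om Z k lam u t n + Om (Z k) lam u t n.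
Proof.
rewrite /seqV big_nat_recr //= subnn expr0 scale1r addrA; congr (_ + _).
rewrite scalerDr scalerA -exprS; congr (_ + _).
rewrite scaler_sumr; apply: eq_big_nat => i /andP [_ lt_ik].
by rewrite scalerA -exprS subSn.
Qed.

Lemma seqV0 (Y0 : Vr R q r) (Om : Bq R q -> Vr R q r) (Z : nat -> Bq R q)
    lam u t n :
  seqV Y0 Om Z 0 lam u t n = Y0 lam u t n.
Proof. by rewrite /seqV big_geq // addr0 expr0 scale1r. Qed.

Lemma zc_op_affine (Y O Y' : Vr R q r) (a : R) lam u t n :
  (forall n', Y' lam u t n' = a *: Y lam u t n' + O lam u t n') ->
  zc_op U Y' lam u t n = a *: zc_op U Y lam u t n + zc_op U O lam u t n.
Proof.
move=> eqY'; rewrite /zc_op /shiftE !eqY'.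
rewrite mulmxDl mulmxDr -scalemxAl -scalemxAr scalerBr.
by rewrite addrACA opprD addrA.
Qed.

Lemma zc_op_seqV (Y0 : Vr R q r) (Om : Bq R q -> Vr R q r) (Z : nat -> Bq R q)
    (A : nat -> Vr R q r) :
  (forall lam u t n, zc_op U Y0 lam u t n = A 0%N lam u t n) ->
  (forall k lam u t n, zc_op U (Om (Z k)) lam u t n
      = A k.+1 lam u t n - lam *: A k lam u t n) ->
  forall k lam u t n, zc_op U (seqV Y0 Om Z k) lam u t n = A k lam u t n.
Proof.
move=> zcY0 zcOm; elim=> [|k IHk] lam u t n.
  by rewrite -zcY0 /zc_op /shiftE !seqV0.
rewrite (@zc_op_affine (seqV Y0 Om Z k) (Om (Z k)) _ lam) => [|n']; last exact: seqV_S.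
by rewrite IHk zcOm addrC subrK.
Qed.

Lemma Ut_isospectral (X : Bq R q) lam u t n :
  Ut U X (fun _ => 0) lam u t n = gateaux U X lam u t n.
Proof. by rewrite /Ut scale0r addr0. Qed.

Lemma zero_curvature_hierarchy (Om : Bq R q -> Vr R q r) (V0 W0 : Vr R q r)
    (G gamma K rho : nat -> Bq R q) :
  (forall lam u t n, zc_op U V0 lam u t n = gateaux U (K 0%N) lam u t n) ->
  (forall lam u t n, zc_op U W0 lam u t n
     = gateaux U (rho 0%N) lam u t n + lam *: dlam U lam u t n) ->
  (forall k lam u t n, zc_op U (Om (G k)) lam u t n
     = gateaux U (K k.+1) lam u t n - lam *: gateaux U (K k) lam u t n) ->
  (forall l lam u t n, zc_op U (Om (gamma l)) lam u t n
     = gateaux U (rho l.+1) lam u t n - lam *: gateaux U (rho l) lam u t n) ->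
  forall k l : nat,
    (forall lam u t n, zc_op U (seqV V0 Om G k) lam u t n
       = gateaux U (K k) lam u t n) /\
    (forall lam u t n, zc_op U (seqV W0 Om gamma l) lam u t n
       = gateaux U (rho l) lam u t n + lam ^+ l.+1 *: dlam U lam u t n) /\
    (forall lam u t n, Ut U (K k) (fun _ => 0) lam u t n
       = zc_op U (seqV V0 Om G k) lam u t n) /\
    (forall lam u t n, Ut U (rho l) (fun lam' => lam' ^+ l.+1) lam u t n
       = zc_op U (seqV W0 Om gamma l) lam u t n).
Proof.
move=> zcV0 zcW0 zcOmG zcOmgamma k l.
have zcV : forall lam u t n,
    zc_op U (seqV V0 Om G k) lam u t n = gateaux U (K k) lam u t n.
  exact: (zc_op_seqV V0 Om G (fun k => gateaux U (K k))).
have zcW : forall lam u t n, zc_op U (seqV W0 Om gamma l) lam u t n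
    = gateaux U (rho l) lam u t n + lam ^+ l.+1 *: dlam U lam u t n.
  apply: (zc_op_seqV W0 Om gamma (fun l lam u t n =>
      gateaux U (rho l) lam u t n + lam ^+ l.+1 *: dlam U lam u t n)).
    by move=> lam u t n; rewrite zcW0 expr1.
  move=> j lam u t n; rewrite zcOmgamma scalerDr scalerA -exprS.
  by rewrite opprD addrACA subrr addr0 addrC.
split; first exact: zcV; split; first exact: zcW.
by split=> lam u t n; [rewrite Ut_isospectral zcV | rewrite zcW].
Qed.

End ZeroCurvature.

Theorem theorem3 (R : realType) (q r : nat) :
  (forall (U : Vr R q r) (Phi : Bq R q -> Bq R q) (K0 : Bq R q)
     (Omega : Bq R q -> Vr R q r) (V0 W0 : Vr R q r) (rho0 : Bq R q),
   (forall X lam u t n,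
      zc_op U (Omega X) lam u t n
      = gateaux U (Phi X) lam u t n - lam *: gateaux U X lam u t n) ->
   (forall lam u t n, zc_op U V0 lam u t n = gateaux U K0 lam u t n) ->
   (forall lam u t n, zc_op U W0 lam u t n
      = gateaux U rho0 lam u t n + lam *: dlam U lam u t n) ->
   let K := fun k : nat => iter k Phi K0 in
   let rho := fun l : nat => iter l Phi rho0 in
   let V := seqV V0 Omega K in
   let W := seqV W0 Omega rho in
   forall (k l : nat),
     (forall lam u t n, zc_op U (V k) lam u t n = gateaux U (K k) lam u t n) /\
     (forall lam u t n, zc_op U (W l) lam u t n
        = gateaux U (rho l) lam u t n + lam ^+ l.+1 *: dlam U lam u t n) /\
     (forall lam u t n, Ut U (K k) (fun _ => 0) lam u t n = zc_op U (V k) lam u t n) /\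
     (forall lam u t n, Ut U (rho l) (fun lam' => lam' ^+ l.+1) lam u t n
        = zc_op U (W l) lam u t n))
  /\
  (forall (U : Vr R q r) (J M : Bq R q -> Bq R q) (K : nat -> Bq R q)
     (Gm1 : Bq R q) (G : nat -> Bq R q) (rho gamma : nat -> Bq R q)
     (OmegaJ : Bq R q -> Vr R q r) (V0 W0 : Vr R q r),
   (* Gm1 plays the role of G_{-1}. *)
   (forall k, K k = J (G k)) ->
   K 0%N = M Gm1 ->
   (forall k, K k.+1 = M (G k)) ->
   (forall l, rho l = J (gamma l)) ->
   (forall l, rho l.+1 = M (gamma l)) ->
   (forall X lam u t n,
      zc_op U (OmegaJ X) lam u t n
      = gateaux U (M X) lam u t n - lam *: gateaux U (J X) lam u t n) ->
   (forall lam u t n, zc_op U V0 lam u t n = gateaux U (K 0%N) lam u t n) ->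
   (forall lam u t n, zc_op U W0 lam u t n
      = gateaux U (rho 0%N) lam u t n + lam *: dlam U lam u t n) ->
   let V := seqV V0 OmegaJ G in
   let W := seqV W0 OmegaJ gamma in
   forall (k l : nat),
     (forall lam u t n, zc_op U (V k) lam u t n = gateaux U (K k) lam u t n) /\
     (forall lam u t n, zc_op U (W l) lam u t n
        = gateaux U (rho l) lam u t n + lam ^+ l.+1 *: dlam U lam u t n) /\
     (forall lam u t n, Ut U (K k) (fun _ => 0) lam u t n = zc_op U (V k) lam u t n) /\
     (forall lam u t n, Ut U (rho l) (fun lam' => lam' ^+ l.+1) lam u t n
        = zc_op U (W l) lam u t n)).
Proof.
split.
- move=> U Phi K0 Omega V0 W0 rho0 zcOm zcV0 zcW0 K rho V W.
  exact: (@zero_curvature_hierarchy R q r U Omega V0 W0 K rho K rho).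
- move=> U J M K _ G rho gamma OmegaJ V0 W0 KJ _ KM rhoJ rhoM zcOm zcV0 zcW0 V W.
  apply: zero_curvature_hierarchy => // j lam u t n.
    by rewrite zcOm KM KJ.
  by rewrite zcOm rhoM rhoJ.
Qed.
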